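(* Let $S,T$ be numerical semigroups such that $\mathrm H_S(x^w)f(x)=\mathrm H_T(x)$ for some integer $w\ge1$ and some polynomial $f$ with nonnegative integer coefficients. Put $Q(x)=\mathrm P_T(x)/\mathrm P_S(x^w)$. Then $Q(0)=1$, $Q(x)$ is a monic polynomial, and its nonzero coefficients alternate between $1$ and $-1$.
   Context: A numerical semigroup is a submonoid $S$ of $(\mathbb N,+)$ with finite complement in $\mathbb N$. $\mathrm H_S(x)=\sum_{s\in S}x^s$ and $\mathrm P_S(x)=(1-x)\mathrm H_S(x)$. *)

From mathcomp Require Import all_boot all_order all_algebra.
Set Implicit Arguments. Unset Strict Implicit. Unset Printing Implicit Defensive.
Import Order.TTheory GRing.Theory Num.Theory.
Local Open Scope ring_scope.

Definition numerical_semigroup (S : pred nat) : Prop :=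
  [/\ S 0%N,
      (forall a b, S a -> S b -> S (a + b)%N) &
      exists N : nat, forall n, (N <= n)%N -> S n].

(* Coefficient of x^n in H_S(x) = sum_{s in S} x^s. *)
Definition Hcoef (S : pred nat) (n : nat) : int := (S n)%:R.

(* Coefficient of x^n in H_S(x^w). *)
Definition Hwcoef (S : pred nat) (w n : nat) : int :=
  ((w %| n)%N && S (n %/ w)%N)%:R.

(* Coefficient of x^n in the formal power series H_S(x^w) f(x). *)
Definition Hw_mul_coef (S : pred nat) (w : nat) (f : {poly int}) (n : nat) : int :=
  \sum_(i < n.+1) f`_i * Hwcoef S w (n - i)%N.

(* Coefficient of x^n in P_S(x) = (1 - x) H_S(x). *)
Definition Pcoef (S : pred nat) (n : nat) : int :=
  Hcoef S n - (if n is m.+1 then Hcoef S m else 0).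

(* p is the polynomial P_S(x) = (1 - x) H_S(x) (a polynomial since S has
   finite complement). *)
Definition is_P_poly (S : pred nat) (p : {poly int}) : Prop :=
  forall n, p`_n = Pcoef S n.

Definition alternating_coefs (q : {poly int}) : Prop :=
  (forall i, q`_i = 0 \/ q`_i = 1 \/ q`_i = -1) /\
  (forall i j, (i < j)%N -> q`_i != 0 -> q`_j != 0 ->
     (forall k, (i < k < j)%N -> q`_k = 0) -> q`_j = - q`_i).

From mathcomp Require Import all_boot all_order all_algebra.
From mathcomp Require Import zify ring.
Set Implicit Arguments.
Unset Strict Implicit.
Unset Printing Implicit Defensive.
Import GRing.Theory Num.Theory.
Local Open Scope ring_scope.

(* Let g_m be the sum of the coefficients f_j with j > m and j = m (mod w).
   Comparing the coefficients of x^n, n large in a given residue class r,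
   in H_S(x^w) f(x) = H_T(x) shows that the coefficients of f in each
   residue class mod w sum to 1; since f >= 0, every g_m is 0 or 1.  This
   yields f = (1 + x + ... + x^(w-1)) Q with Q = 1 + (x - 1) g, hence
   (1 - x) H_T(x) = Q(x) (1 - x^w) H_S(x^w), that is P_T = Q P_S(x^w).  The
   coefficients of Q are the successive differences of the 0/1 sequence
   1, g_0, g_1, ..., so its nonzero ones alternate between 1 and -1. *)

Definition conv (p : {poly int}) (h : nat -> int) (n : nat) : int :=
  \sum_(i < n.+1) p`_i * h (n - i)%N.

Lemma eq_conv p h1 h2 n : (forall m, (m <= n)%N -> h1 m = h2 m) ->
  conv p h1 n = conv p h2 n.
Proof. by move=> eq_h; apply: eq_bigr => i _; rewrite eq_h ?leq_subr. Qed.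

Lemma conv_coef p (r : {poly int}) n : conv p (fun m => r`_m) n = (p * r)`_n.
Proof. by rewrite coefM. Qed.

Lemma conv_poly p h n : conv p h n = (p * \poly_(i < n.+1) h i)`_n.
Proof.
by rewrite -conv_coef; apply: eq_conv => m le_mn; rewrite coef_poly ltnS le_mn.
Qed.

Lemma conv_mul p q h n : conv p (conv q h) n = conv (p * q) h n.
Proof.
rewrite (conv_poly (p * q)) -mulrA -conv_coef; apply: eq_conv => m le_mn.
rewrite -conv_coef; apply: eq_conv => k le_km.
by rewrite coef_poly ltnS (leq_trans le_km le_mn).
Qed.

Lemma conv_Xn k h n : conv 'X^k h n = if (k <= n)%N then h (n - k)%N else 0.
Proof.
by rewrite conv_poly coefXnM; case: leqP; rewrite // coef_poly ltnS leq_subr.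
Qed.

Lemma conv_sub p q h n : conv (p - q) h n = conv p h n - conv q h n.
Proof. by rewrite /conv -sumrB; apply: eq_bigr => i _; rewrite coefB mulrBl. Qed.

Lemma conv_1subX h n : conv (1 - 'X) h n = h n - (if n is m.+1 then h m else 0).
Proof.
rewrite conv_sub -(expr0 'X) conv_Xn subn0 -(expr1 'X) conv_Xn.
by case: n => //= n; rewrite subn1.
Qed.

Lemma conv_1subXn_Hwcoef S w (PS : {poly int}) m : (0 < w)%N -> is_P_poly S PS ->
  conv (1 - 'X^w) (Hwcoef S w) m = (PS \Po 'X^w)`_m.
Proof.
move=> w_gt0 PS_P.
rewrite conv_sub -(expr0 'X) conv_Xn subn0 conv_Xn coef_comp_poly_Xn //.
rewrite PS_P /Pcoef /Hcoef /Hwcoef.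
case: (leqP w m) => [le_wm | lt_mw]; last first.
  by rewrite (divn_small lt_mw); case: (w %| m)%N; rewrite /= ?subr0.
rewrite -(subnK le_wm) addnK dvdn_addl // divnDr // divnn w_gt0 addn1.
by case: (w %| m - w)%N; rewrite /= ?subr0.
Qed.

Lemma P_poly_eq_mul_comp S T w (f Q PS PT : {poly int}) : (0 < w)%N ->
  (forall n, Hw_mul_coef S w f n = Hcoef T n) ->
  is_P_poly S PS -> is_P_poly T PT ->
  (1 - 'X) * f = Q * (1 - 'X^w) -> PT = Q * (PS \Po 'X^w).
Proof.
move=> w_gt0 HfT PS_P PT_P f_Q; apply/polyP => n.
have -> : PT`_n = conv (1 - 'X) (conv f (Hwcoef S w)) n.
  by rewrite PT_P conv_1subX /Pcoef; case: n => [|n]; rewrite -!HfT.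
rewrite conv_mul f_Q -conv_mul -conv_coef; apply: eq_conv => m _.
exact: conv_1subXn_Hwcoef.
Qed.

Lemma mod_neq_window a b w : (a < b < a + w)%N -> (b %% w != a %% w)%N.
Proof.
case/andP=> lt_ab lt_b_aw; apply/eqP => eq_mod.
have : (w %| b - a)%N by rewrite -eqn_mod_dvd ?(ltnW lt_ab) // eq_mod.
by move/dvdn_leq; rewrite subn_gt0 lt_ab => /(_ isT); lia.
Qed.

Section ResidueClasses.

Variables (w : nat) (f : {poly int}).

Definition class_sum (r : nat) : int :=
  \sum_(j < size f | (j %% w == r)%N) f`_j.

Definition tail_class_sum (m : nat) : int :=
  \sum_(j < size f | (m < j)%N && (j %% w == m %% w)%N) f`_j.

Definition tail_class_poly : {poly int} := \poly_(m < size f) tail_class_sum m.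

Lemma coef_tail_class_poly m : tail_class_poly`_m = tail_class_sum m.
Proof.
rewrite coef_poly; case: ltnP => // le_f_m.
by rewrite /tail_class_sum big1 // => j /andP[lt_mj _]; have := ltn_ord j; lia.
Qed.

Lemma coef_as_sum m : f`_m = \sum_(j < size f | j == m :> nat) f`_j.
Proof.
by rewrite (big_ord1_eq _ (fun j => f`_j)); case: ltnP => // ?; rewrite nth_default.
Qed.

Lemma class_sum_split m : (m < w)%N -> class_sum m = f`_m + tail_class_sum m.
Proof.
move=> lt_mw; rewrite /class_sum /tail_class_sum coef_as_sum (modn_small lt_mw).
rewrite big_mkcond [in RHS]big_mkcond [X in _ + X]big_mkcond -big_split /=.
apply: eq_bigr => j _; case: (ltngtP j m) => [lt_jm | lt_mj | ->].
- by rewrite (modn_small (ltn_trans lt_jm lt_mw)) (ltn_eqF lt_jm).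
- by rewrite add0r.
- by rewrite modn_small // eqxx addr0.
Qed.

Lemma tail_class_sum_split m : (0 < w)%N ->
  tail_class_sum m = f`_(m + w) + tail_class_sum (m + w).
Proof.
move=> w_gt0; rewrite /tail_class_sum coef_as_sum modnDr.
rewrite big_mkcond [in RHS]big_mkcond [X in _ + X]big_mkcond -big_split /=.
apply: eq_bigr => j _; case: (ltngtP j (m + w)) => [lt_j_mw | lt_mw_j | ->].
- rewrite add0r; case: ifP => // /andP[lt_mj /eqP eq_mod].
  by have := @mod_neq_window m j w; rewrite lt_mj lt_j_mw eq_mod eqxx => /(_ isT).
- have lt_mj : (m < j)%N by lia.
  by rewrite add0r lt_mj.
- have lt_m_mw : (m < m + w)%N by lia.
  by rewrite modnDr eqxx lt_m_mw addr0.
Qed.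

Lemma poly_eq_geom_mul : (0 < w)%N ->
  (forall r, (r < w)%N -> class_sum r = 1) ->
  f = (\sum_(i < w) 'X^i) * (1 + ('X - 1) * tail_class_poly).
Proof.
move=> w_gt0 class1.
have -> : f = \sum_(i < w) 'X^i + ('X^w - 1) * tail_class_poly.
  apply/polyP => m; rewrite coefD mulrBl mul1r coefB coefXnM !coef_tail_class_poly.
  have -> : (\sum_(i < w) 'X^i : {poly int})`_m = (m < w)%:R.
    rewrite coef_sum (eq_bigr (fun i : 'I_w => if i == m :> nat then 1 else 0)).
      by rewrite -big_mkcond (big_ord1_eq _ (fun=> 1)); case: ltnP.
    by move=> i _; rewrite coefXn eq_sym; case: eqP.
  case: (ltnP m w) => [lt_mw | le_wm].
    by have := class_sum_split lt_mw; rewrite class1 //= => ?; lia.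
  rewrite -(subnK le_wm) addnK.
  by have := tail_class_sum_split (m - w) w_gt0; rewrite /= => ?; lia.
by rewrite subrX1; ring.
Qed.

End ResidueClasses.

Section SemigroupIdentity.

Variables (S T : pred nat) (w : nat) (f : {poly int}).
Hypotheses (hS : numerical_semigroup S) (hT : numerical_semigroup T).
Hypothesis w_gt0 : (0 < w)%N.
Hypothesis HfT : forall n, Hw_mul_coef S w f n = Hcoef T n.

Lemma coef0_eq1 : f`_0 = 1.
Proof.
have := HfT 0; rewrite /Hw_mul_coef big_ord1 /Hwcoef /Hcoef dvdn0 div0n.
by case: hS => -> _ _; case: hT => -> _ _; rewrite mulr1.
Qed.

(* For n = r (mod w) beyond the conductors of S and T and the degree of f,
   the coefficient of x^n on the left is the class sum of r. *)
Lemma class_sum_eq1 r : (r < w)%N -> class_sum w f r = 1.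
Proof.
case: hS hT => [_ _ [NS HS]] [_ _ [NT HT]] lt_rw.
pose n := (r + w * (size f + NS + NT))%N.
have n_mod : (n %% w = r)%N by rewrite /n addnC mulnC modnMDl modn_small.
have le_f_n : (size f <= n.+1)%N by rewrite /n; nia.
have <- : Hw_mul_coef S w f n = 1 by rewrite HfT /Hcoef HT // /n; nia.
rewrite /class_sum /Hw_mul_coef big_mkcond /=.
rewrite (big_ord_widen _ (fun j => if (j %% w == r)%N then f`_j else 0) le_f_n).
rewrite big_mkcond.
apply: eq_bigr => i _; case: (ltnP i (size f)) => [lt_i_f | le_f_i]; last first.
  by rewrite nth_default // mul0r.
have le_in : (i <= n)%N by rewrite -ltnS (leq_trans lt_i_f le_f_n).
rewrite /Hwcoef -eqn_mod_dvd // n_mod eq_sym.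
case: eqP => [_ | _]; last by rewrite mulr0.
rewrite HS ?mulr1 // leq_divRL //.
by move: lt_i_f le_in; rewrite /n; nia.
Qed.

Lemma tail_class_sum0 : tail_class_sum w f 0 = 0.
Proof.
by have := @class_sum_split w f 0 w_gt0; rewrite class_sum_eq1 // coef0_eq1; lia.
Qed.

Hypothesis f_ge0 : forall i, 0 <= f`_i.

Lemma tail_class_sum01 m : tail_class_sum w f m = 0 \/ tail_class_sum w f m = 1.
Proof.
have ge0 : 0 <= tail_class_sum w f m by apply: sumr_ge0 => i _.
have le1 : tail_class_sum w f m <= 1.
  rewrite -(class_sum_eq1 (ltn_pmod m w_gt0)) /class_sum /tail_class_sum.
  rewrite big_mkcond [X in _ <= X]big_mkcond /=.
  by apply: ler_sum => i _; case: (m < i)%N; case: ifP.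
lia.
Qed.

End SemigroupIdentity.

Lemma alternating_coefs_diff01 (q : {poly int}) (G : nat -> int) :
  (forall m, G m = 0 \/ G m = 1) -> (forall m, q`_m = G m - G m.+1) ->
  alternating_coefs q.
Proof.
move=> G01 q_diff; split=> [i | i j lt_ij qi_neq0 qj_neq0 q_gap].
  by rewrite q_diff; have := G01 i; have := G01 i.+1; lia.
have G_const d : (i.+1 + d <= j)%N -> G (i.+1 + d)%N = G i.+1.
  elim: d => [|d IHd] le_dj; first by rewrite addn0.
  have gap : q`_(i.+1 + d) = 0 by apply: q_gap; lia.
  by rewrite -IHd; [move: gap; rewrite q_diff addnS; lia | lia].
have := G_const (j - i.+1)%N; rewrite subnKC // => /(_ (leqnn _)) Gj.
move: qi_neq0 qj_neq0; rewrite !q_diff Gj.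
by have := G01 i; have := G01 i.+1; have := G01 j.+1; lia.
Qed.

Lemma monic_1_add_Xsub1_mul (R : nzRingType) (g : {poly R}) :
  (g == 0) || (g \is monic) -> 1 + ('X - 1) * g \is monic.
Proof.
case/orP=> [/eqP-> | g_monic]; first by rewrite mulr0 addr0 monic1.
have Xsub1_monic : ('X - 1 : {poly R}) \is monic by rewrite -polyC1 monicXsubC.
rewrite monicE lead_coefDr ?lead_coef_monicM ?(monicP g_monic) //.
rewrite size_poly1 (size_monicM Xsub1_monic) ?monic_neq0 //.
by rewrite -polyC1 size_XsubC ltnS lt0n size_poly_eq0 monic_neq0.
Qed.

Lemma coef01_eq0_or_monic (g : {poly int}) :
  (forall m, g`_m = 0 \/ g`_m = 1) -> (g == 0) || (g \is monic).
Proof.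
move=> g01; have [// | g_neq0] := eqVneq g 0; rewrite monicE; apply/eqP.
move: g_neq0; rewrite -lead_coef_eq0 /lead_coef.
by case: (g01 (size g).-1) => ->; rewrite ?eqxx.
Qed.

Lemma coef_1_add_Xsub1_mul (R : nzRingType) (g : {poly R}) m :
  (1 + ('X - 1) * g)`_m = (if m is k.+1 then g`_k else 1) - g`_m.
Proof.
rewrite coefD coef1 mulrBl mul1r coefB coefXM.
by case: m => [|m] /=; rewrite ?sub0r ?add0r.
Qed.

Theorem theorem5 (S T : pred nat) (w : nat) (f : {poly int})
  (PS PT : {poly int}) :
  numerical_semigroup S -> numerical_semigroup T ->
  (1 <= w)%N ->
  (forall i, 0 <= f`_i) ->
  (forall n, Hw_mul_coef S w f n = Hcoef T n) ->
  is_P_poly S PS -> is_P_poly T PT ->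
  exists Q : {poly int},
    [/\ PT = Q * (PS \Po 'X^w),
        Q.[0] = 1,
        Q \is monic &
        alternating_coefs Q].
Proof.
move=> hS hT w_gt0 f_ge0 HfT PS_P PT_P.
set g := tail_class_poly w f; set Q := 1 + ('X - 1) * g.
have g01 m : g`_m = 0 \/ g`_m = 1.
  by rewrite coef_tail_class_poly; exact: tail_class_sum01 hS hT w_gt0 HfT f_ge0 m.
have f_eq : f = (\sum_(i < w) 'X^i) * Q.
  exact: poly_eq_geom_mul w_gt0 (class_sum_eq1 hS hT w_gt0 HfT).
exists Q; split.
- apply: P_poly_eq_mul_comp w_gt0 HfT PS_P PT_P _.
  by rewrite f_eq -[1 - 'X^w]opprB subrX1; ring.
- rewrite horner_coef0 coef_1_add_Xsub1_mul coef_tail_class_poly.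
  by rewrite (tail_class_sum0 hS hT w_gt0 HfT) subr0.
- exact/monic_1_add_Xsub1_mul/coef01_eq0_or_monic.
- apply: (alternating_coefs_diff01 (G := fun m => if m is k.+1 then g`_k else 1)).
    by case=> [|m]; [right | exact: g01].
  exact: coef_1_add_Xsub1_mul.
Qed.
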